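(* Let $G$ and $H$ be graphs without isolated vertices. Then the Kronecker double coverings $K_2 \times G$ and $K_2 \times H$ are isomorphic as graphs if and only if the box complexes $B(G)$ and $B(H)$ are isomorphic as posets (ignoring the involutions).
   Context: A graph $G$ is a set $V(G)$ together with a symmetric subset $E(G) \subset V(G)\times V(G)$ (undirected, no multiple edges, loops allowed; graphs may be infinite). For $v \in V(G)$, $N(v)=\{w : (v,w)\in E(G)\}$; $v$ is isolated if $N(v)=\emptyset$. $K_2$ is the graph with $V(K_2)=\{1,2\}$ and $E(K_2)=\{(1,2),(2,1)\}$. The (tensor) product $G\times H$ has vertex set $V(G)\times V(H)$, with $((x,y),(x',y'))$ an edge iff $(x,x')\in E(G)$ and $(y,y')\in E(H)$; $K_2\times G$ is the Kronecker double covering of $G$. The box complex $B(G)$ is the poset of all pairs $(\sigma,\tau)$ of non-empty (possibly infinite) subsets of $V(G)$ with $\sigma\times\tau\subset E(G)$, ordered by $(\sigma,\tau)\le(\sigma',\tau')$ iff $\sigma\subset\sigma'$ and $\tau\subset\tau'$, and equipped with the involution $(\sigma,\tau)\leftrightarrow(\tau,\sigma)$. *)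

(* graphs may be infinite, so vertex sets are arbitrary Types
   and subsets are predicates V -> Prop. *)

Record graph := Graph {
  vtx : Type;
  edge : vtx -> vtx -> Prop;
  edge_sym : forall x y, edge x y -> edge y x
}.

Definition no_isolated (G : graph) : Prop :=
  forall v : vtx G, exists w, edge G v w.

Definition K2 : graph.
Proof.
  refine (@Graph bool (fun a b => a <> b) _).
  intros x y H E; apply H; symmetry; exact E.
Defined.

Definition tensor (G H : graph) : graph.
Proof.
  refine (@Graph (vtx G * vtx H)
            (fun p q => edge G (fst p) (fst q) /\ edge H (snd p) (snd q)) _).
  intros [x y] [x' y'] [H1 H2]; split; apply edge_sym; assumption.
Defined.

Definition graph_iso (G H : graph) : Prop :=
  exists (f : vtx G -> vtx H) (g : vtx H -> vtx G),
    (forall x, g (f x) = x) /\ (forall y, f (g y) = y) /\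
    (forall x y, edge G x y <-> edge H (f x) (f y)).

Definition box (G : graph) : Type :=
  { p : (vtx G -> Prop) * (vtx G -> Prop) |
      (exists x, fst p x) /\ (exists y, snd p y) /\
      (forall x y, fst p x -> snd p y -> edge G x y) }.

Definition box_le (G : graph) (a b : box G) : Prop :=
  (forall x, fst (proj1_sig a) x -> fst (proj1_sig b) x) /\
  (forall x, snd (proj1_sig a) x -> snd (proj1_sig b) x).

Definition box_poset_iso (G H : graph) : Prop :=
  exists (f : box G -> box H) (g : box H -> box G),
    (forall a, g (f a) = a) /\ (forall b, f (g b) = b) /\
    (forall a b, box_le G a b <-> box_le H (f a) (f b)).

From Stdlib Require Import Classical FunctionalExtensionality PropExtensionality ProofIrrelevance
  IndefiniteDescription Setoid.

(* A box (sigma, tau) of G is a set of vertices of K2 x G meeting both sheets and containing every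
   edge between its two parts. An isomorphism of double covers preserves such sets: two of their
   vertices on one sheet have a common neighbour in the set, so their images lie on one sheet too.

   Conversely, the minimal boxes are the edges of the bipartite graph K2 x G, and two of them share a
   vertex exactly when they have an upper bound lying above no third minimal box. Since K2 x G has no
   triangles, the sets of edges at a vertex are the maximal cliques of this adjacency together with
   the singletons formed by an edge at a vertex of degree one. A poset isomorphism therefore induces
   an adjacency-preserving bijection of vertices; only the two ends of an isolated edge share their
   set of edges, and they are matched according to their sheets. *)

Lemma pred_ext {A : Type} (S T : A -> Prop) : (forall a, S a <-> T a) -> S = T.
Proof. intro H; apply functional_extensionality; intro a; apply propositional_extensionality, H. Qed.

Section PosetNotions.
Context {P : Type} (le : P -> P -> Prop).

Definition minimal (m : P) : Prop := forall b, le b m -> b = m.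

(* In B(G): two edges of K2 x G sharing a vertex ([adjacent_arc]). *)
Definition adjacent (m m' : P) : Prop :=
  minimal m /\ minimal m' /\ m <> m' /\
  exists c, le m c /\ le m' c /\ forall n, minimal n -> le n c -> n = m \/ n = m'.

Definition clique (S : P -> Prop) : Prop :=
  (forall m, S m -> minimal m) /\ (forall m m', S m -> S m' -> m <> m' -> adjacent m m').

Definition maximal_clique (S : P -> Prop) : Prop :=
  clique S /\ forall T, clique T -> (forall m, S m -> T m) -> forall m, T m -> S m.

Definition two_points (S : P -> Prop) : Prop := exists m m', S m /\ S m' /\ m <> m'.

Definition singleton (S : P -> Prop) (m : P) : Prop := forall n, S n <-> n = m.

Definition pendant (m : P) : Prop :=
  minimal m /\ ~ exists m1 m2, adjacent m m1 /\ adjacent m m2 /\ m1 <> m2 /\ ~ adjacent m1 m2.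

(* In B(G): the set of edges at a vertex of K2 x G ([star_edges_at], [star_is_edges_at]). *)
Definition star (S : P -> Prop) : Prop :=
  (maximal_clique S /\ two_points S) \/ (exists m, singleton S m /\ pendant m).

Definition isolated_point (S : P -> Prop) : Prop :=
  exists m, singleton S m /\ ~ exists n, adjacent m n.

End PosetNotions.

Definition rel_iso {P Q : Type} (r1 : P -> P -> Prop) (r2 : Q -> Q -> Prop)
    (F : P -> Q) (F' : Q -> P) : Prop :=
  (forall p, F' (F p) = p) /\ (forall q, F (F' q) = q) /\ (forall a b, r1 a b <-> r2 (F a) (F b)).

Lemma rel_iso_sym {P Q : Type} (r1 : P -> P -> Prop) (r2 : Q -> Q -> Prop) F F' :
  rel_iso r1 r2 F F' -> rel_iso r2 r1 F' F.
Proof.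
  intros [FK [F'K rF]]; split; [exact F'K | split; [exact FK |]].
  intros a b; rewrite (rF (F' a) (F' b)), !F'K; reflexivity.
Qed.

Lemma forall_surj {A B : Type} (f : A -> B) (g : B -> A) (fg : forall b, f (g b) = b)
    (R : B -> Prop) : (forall b, R b) <-> (forall a, R (f a)).
Proof. split; [auto | intros H b; rewrite <- fg; apply H]. Qed.

Lemma exists_surj {A B : Type} (f : A -> B) (g : B -> A) (fg : forall b, f (g b) = b)
    (R : B -> Prop) : (exists b, R b) <-> (exists a, R (f a)).
Proof. split; [intros [b H]; exists (g b); rewrite fg; exact H | intros [a H]; eauto]. Qed.

Section OrderIsoInvariance.
Context {P Q : Type} (le1 : P -> P -> Prop) (le2 : Q -> Q -> Prop) (F : P -> Q) (F' : Q -> P).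
Hypothesis iso : rel_iso le1 le2 F F'.

Let FK p : F' (F p) = p. Proof. apply iso. Qed.
Let F'K q : F (F' q) = q. Proof. apply iso. Qed.
Let le_F a b : le2 (F a) (F b) <-> le1 a b. Proof. symmetry; apply iso. Qed.
Let all_F := forall_surj F F' F'K.
Let ex_F := exists_surj F F' F'K.
Let all_sets := forall_surj (fun (T : P -> Prop) q => T (F' q)) (fun T p => T (F p))
  (fun T => functional_extensionality _ _ (fun q => f_equal T (F'K q))).

Lemma eq_F a b : F a = F b <-> a = b.
Proof. split; [intro e; rewrite <- (FK a), e, FK | intros ->]; reflexivity. Qed.

Lemma minimal_F a : minimal le2 (F a) <-> minimal le1 a.
Proof. unfold minimal; rewrite all_F; setoid_rewrite le_F; setoid_rewrite eq_F; reflexivity. Qed.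

Lemma adjacent_F a b : adjacent le2 (F a) (F b) <-> adjacent le1 a b.
Proof.
  unfold adjacent; rewrite ex_F; setoid_rewrite all_F; setoid_rewrite le_F.
  setoid_rewrite minimal_F; setoid_rewrite eq_F; reflexivity.
Qed.

(* Each pass of [setoid_rewrite all_F] transports one quantifier prefix; the second one also unfolds
   [minimal le2 (F _)], which after [le_F] and [eq_F] is [minimal le1 _] up to conversion. *)
Lemma clique_F S : clique le2 (fun q => S (F' q)) <-> clique le1 S.
Proof.
  unfold clique; do 2 setoid_rewrite all_F; setoid_rewrite FK.
  setoid_rewrite adjacent_F; setoid_rewrite le_F; setoid_rewrite eq_F; reflexivity.
Qed.

Lemma maximal_clique_F S : maximal_clique le2 (fun q => S (F' q)) <-> maximal_clique le1 S.
Proof.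
  unfold maximal_clique; rewrite all_sets; setoid_rewrite clique_F.
  setoid_rewrite all_F; setoid_rewrite FK; reflexivity.
Qed.

Lemma two_points_F S : two_points (fun q => S (F' q)) <-> two_points S.
Proof.
  unfold two_points; do 2 setoid_rewrite ex_F; setoid_rewrite FK; setoid_rewrite eq_F; reflexivity.
Qed.

Lemma singleton_F S m : singleton (fun q => S (F' q)) (F m) <-> singleton S m.
Proof. unfold singleton; rewrite all_F; setoid_rewrite FK; setoid_rewrite eq_F; reflexivity. Qed.

Lemma pendant_F m : pendant le2 (F m) <-> pendant le1 m.
Proof.
  unfold pendant; do 2 setoid_rewrite ex_F; setoid_rewrite minimal_F.
  setoid_rewrite adjacent_F; setoid_rewrite eq_F; reflexivity.
Qed.

Lemma star_F S : star le2 (fun q => S (F' q)) <-> star le1 S.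
Proof.
  unfold star; rewrite maximal_clique_F, two_points_F, ex_F.
  setoid_rewrite singleton_F; setoid_rewrite pendant_F; reflexivity.
Qed.

Lemma isolated_point_F S : isolated_point le2 (fun q => S (F' q)) <-> isolated_point le1 S.
Proof.
  unfold isolated_point; do 2 setoid_rewrite ex_F; setoid_rewrite singleton_F.
  setoid_rewrite adjacent_F; reflexivity.
Qed.

End OrderIsoInvariance.

Section DoubleCover.
Variable G : graph.

Definition cover_set (a : box G) (u : vtx (tensor K2 G)) : Prop :=
  if fst u then fst (proj1_sig a) (snd u) else snd (proj1_sig a) (snd u).

Lemma box_ext (a b : box G) : (forall u, cover_set a u <-> cover_set b u) -> a = b.
Proof.
  destruct a as [[s t] pa], b as [[s' t'] pb]; simpl; intro H.
  assert (s = s') as <- by (apply pred_ext; intro z; exact (H (true, z))).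
  assert (t = t') as <- by (apply pred_ext; intro z; exact (H (false, z))).
  f_equal; apply proof_irrelevance.
Qed.

Lemma box_le_cover (a b : box G) :
  box_le G a b <-> forall u, cover_set a u -> cover_set b u.
Proof.
  split.
  - intros [Hs Ht] [[|] z]; unfold cover_set; simpl; auto.
  - intro H; split; intro z; [exact (H (true, z)) | exact (H (false, z))].
Qed.

Lemma box_edge (a : box G) x y :
  fst (proj1_sig a) x -> snd (proj1_sig a) y -> edge G x y.
Proof. apply (proj2_sig a). Qed.

Lemma edge_double_cover (u v : vtx (tensor K2 G)) :
  edge (tensor K2 G) u v <-> fst u <> fst v /\ edge G (snd u) (snd v).
Proof. reflexivity. Qed.

Lemma cover_set_edge (a : box G) u v :
  cover_set a u -> cover_set a v -> fst u <> fst v -> edge (tensor K2 G) u v.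
Proof.
  rewrite edge_double_cover.
  destruct u as [[|] x], v as [[|] y]; simpl; intros hu hv hn; split; auto;
    try congruence; [apply box_edge with a | apply edge_sym, box_edge with a]; assumption.
Qed.

Lemma cover_set_sheet (a : box G) b : exists u, cover_set a u /\ fst u = b.
Proof.
  destruct (proj2_sig a) as [[x hx] [[y hy] _]].
  destruct b; [exists (true, x) | exists (false, y)]; auto.
Qed.

End DoubleCover.

Section BoxImage.
Variables (G H : graph) (f : vtx (tensor K2 G) -> vtx (tensor K2 H))
  (g : vtx (tensor K2 H) -> vtx (tensor K2 G)).
Hypothesis iso : rel_iso (edge (tensor K2 G)) (edge (tensor K2 H)) f g.

Let fK u : g (f u) = u. Proof. apply iso. Qed.
Let gK v : f (g v) = v. Proof. apply iso. Qed.
Let edge_f u v : edge (tensor K2 G) u v <-> edge (tensor K2 H) (f u) (f v).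
Proof. apply iso. Qed.

(* Two points of a box on one sheet have a common neighbour in the box, on the other sheet. *)
Lemma iso_same_sheet (a : box G) u1 u2 :
  cover_set G a u1 -> cover_set G a u2 -> fst u1 = fst u2 -> fst (f u1) = fst (f u2).
Proof.
  intros h1 h2 e.
  destruct (cover_set_sheet G a (negb (fst u1))) as [u3 [h3 e3]].
  assert (E1 : edge (tensor K2 G) u1 u3)
    by (apply cover_set_edge with a; auto; rewrite e3; destruct (fst u1); discriminate).
  assert (E2 : edge (tensor K2 G) u2 u3)
    by (apply cover_set_edge with a; auto; rewrite e3, <- e; destruct (fst u1); discriminate).
  apply edge_f, edge_double_cover in E1 as [n1 _]; apply edge_f, edge_double_cover in E2 as [n2 _].
  destruct (fst (f u1)), (fst (f u2)), (fst (f u3)); congruence.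
Qed.

Lemma iso_meets_sheet (a : box G) b : exists y, cover_set G a (g (b, y)).
Proof.
  destruct (cover_set_sheet G a true) as [u1 [h1 e1]], (cover_set_sheet G a false) as [u2 [h2 e2]].
  assert (E : edge (tensor K2 G) u1 u2) by (apply cover_set_edge with a; auto; congruence).
  apply edge_f, edge_double_cover in E as [n _].
  destruct (Bool.bool_dec (fst (f u1)) b) as [<- | nb].
  - exists (snd (f u1)); rewrite <- surjective_pairing, fK; exact h1.
  - assert (fst (f u2) = b) as <- by (destruct (fst (f u1)), (fst (f u2)), b; congruence).
    exists (snd (f u2)); rewrite <- surjective_pairing, fK; exact h2.
Qed.

Lemma iso_image_edge (a : box G) x y :
  cover_set G a (g (true, x)) -> cover_set G a (g (false, y)) -> edge H x y.
Proof.
  intros hx hy.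
  assert (hn : fst (g (true, x)) <> fst (g (false, y))).
  { intro e; pose proof (iso_same_sheet a _ _ hx hy e) as e'; rewrite !gK in e'; discriminate. }
  pose proof (cover_set_edge G a _ _ hx hy hn) as E.
  apply edge_f in E; rewrite !gK in E; apply E.
Qed.

Definition box_image (a : box G) : box H :=
  exist _ (fun y => cover_set G a (g (true, y)), fun y => cover_set G a (g (false, y)))
    (conj (iso_meets_sheet a true) (conj (iso_meets_sheet a false) (iso_image_edge a))).

Lemma cover_box_image (a : box G) v : cover_set H (box_image a) v <-> cover_set G a (g v).
Proof. destruct v as [[|] y]; reflexivity. Qed.

End BoxImage.

Lemma box_iso_of_double_cover_iso (G H : graph) :
  graph_iso (tensor K2 G) (tensor K2 H) -> box_poset_iso G H.
Proof.
  intros [f [g iso]].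
  pose proof (rel_iso_sym _ _ _ _ iso) as iso'.
  pose proof iso as [fK [gK _]].
  exists (box_image G H f g iso), (box_image H G g f iso'); split; [| split].
  - intro a; apply box_ext; intro u; rewrite !cover_box_image, fK; reflexivity.
  - intro b; apply box_ext; intro v; rewrite !cover_box_image, gK; reflexivity.
  - intros a b; rewrite !box_le_cover; split; intros Hab u.
    + rewrite !cover_box_image; auto.
    + specialize (Hab (f u)); rewrite !cover_box_image, fK in Hab; exact Hab.
Qed.

Section Arcs.
Variable G : graph.

Definition is_arc (x y : vtx G) (a : box G) : Prop :=
  (forall z, fst (proj1_sig a) z <-> z = x) /\ (forall z, snd (proj1_sig a) z <-> z = y).

Definition pair_box (x x' y y' : vtx G) (h : edge G x y) (h' : edge G x' y')
    (hs : x = x' \/ y = y') : box G.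
Proof.
  refine (exist _ (fun z => z = x \/ z = x', fun z => z = y \/ z = y') _); simpl.
  split; [eauto | split; [eauto |]].
  intros a b [-> | ->] [-> | ->]; destruct hs as [<- | <-]; assumption.
Defined.

Definition arc_box (x y : vtx G) (h : edge G x y) : box G := pair_box x x y y h h (or_introl eq_refl).

Lemma arc_box_is_arc x y h : is_arc x y (arc_box x y h).
Proof. split; intro z; simpl; tauto. Qed.

Lemma is_arc_edge x y a : is_arc x y a -> edge G x y.
Proof. intros [hx hy]; apply box_edge with a; [apply hx | apply hy]; reflexivity. Qed.

Lemma is_arc_ends x y x' y' a : is_arc x y a -> is_arc x' y' a -> x = x' /\ y = y'.
Proof. intros [hx hy] [hx' hy']; split; symmetry; [apply hx, hx' | apply hy, hy']; reflexivity. Qed.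

Lemma is_arc_unique x y a b : is_arc x y a -> is_arc x y b -> a = b.
Proof.
  intros [hx hy] [hx' hy']; apply box_ext; intros [[|] z]; unfold cover_set; simpl;
    [rewrite hx, hx' | rewrite hy, hy']; reflexivity.
Qed.

Lemma cover_arc x y a b z :
  is_arc x y a -> cover_set G a (b, z) <-> (if b then z = x else z = y).
Proof. intros [hx hy]; destruct b; [apply hx | apply hy]. Qed.

Lemma minimal_arc (a : box G) : minimal (box_le G) a <-> exists x y, is_arc x y a.
Proof.
  split.
  - intro Hm; destruct (proj2_sig a) as [[x hx] [[y hy] _]].
    exists x, y; rewrite <- (Hm (arc_box x y (box_edge G a x y hx hy))).
    + apply arc_box_is_arc.
    + split; simpl; intros z [-> | ->]; assumption.
  - intros [x [y [hx hy]]] b [hs ht].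
    destruct (proj2_sig b) as [[x0 hx0] [[y0 hy0] _]].
    assert (x0 = x) as <- by (apply hx, hs, hx0).
    assert (y0 = y) as <- by (apply hy, ht, hy0).
    apply box_ext; intros [[|] z]; unfold cover_set; simpl; split; auto;
      [rewrite hx | rewrite hy]; intros ->; assumption.
Qed.

Lemma adjacent_arc x y x' y' a a' : is_arc x y a -> is_arc x' y' a' ->
  adjacent (box_le G) a a' <-> a <> a' /\ (x = x' \/ y = y').
Proof.
  intros ha ha'; split.
  - intros [_ [_ [ne [c [[hxc hyc] [[hxc' hyc'] hc]]]]]]; split; [exact ne |].
    pose proof ha as [hx hy]; pose proof ha' as [hx' hy'].
    assert (e : edge G x y')
      by (apply box_edge with c; [apply hxc, hx | apply hyc', hy']; reflexivity).
    destruct (hc (arc_box x y' e)) as [E | E].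
    + apply minimal_arc; eauto using arc_box_is_arc.
    + split; simpl; intros z [-> | ->];
        [apply hxc, hx | apply hxc, hx | apply hyc', hy' | apply hyc', hy']; reflexivity.
    + pose proof (arc_box_is_arc x y' e) as hb; rewrite E in hb.
      right; exact (proj2 (is_arc_ends _ _ _ _ _ ha hb)).
    + pose proof (arc_box_is_arc x y' e) as hb; rewrite E in hb.
      left; exact (proj1 (is_arc_ends _ _ _ _ _ hb ha')).
  - intros [ne hs].
    split; [apply minimal_arc; eauto | split; [apply minimal_arc; eauto | split; [exact ne |]]].
    pose proof ha as [hx hy]; pose proof ha' as [hx' hy'].
    exists (pair_box x x' y y' (is_arc_edge _ _ _ ha) (is_arc_edge _ _ _ ha') hs).
    split; [split; simpl; intros z hz; [left; apply hx | left; apply hy]; exact hz |].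
    split; [split; simpl; intros z hz; [right; apply hx' | right; apply hy']; exact hz |].
    intros n mn [hxn hyn]; apply minimal_arc in mn as [p [q hn]]; pose proof hn as [hp hq].
    specialize (hxn p (proj2 (hp p) eq_refl)); specialize (hyn q (proj2 (hq q) eq_refl)).
    simpl in hxn, hyn.
    destruct hxn as [-> | ->], hyn as [-> | ->]; destruct hs as [<- | <-];
      first [left; apply (is_arc_unique _ _ _ _ hn ha) | right; apply (is_arc_unique _ _ _ _ hn ha')].
Qed.

End Arcs.

Section EdgesAt.
Variable G : graph.

(* The minimal boxes are the arcs, i.e. the edges of K2 x G ([minimal_arc]). *)
Definition edges_at (w : vtx (tensor K2 G)) (a : box G) : Prop :=
  minimal (box_le G) a /\ cover_set G a w.

Lemma edges_at_arc x y a b z :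
  is_arc G x y a -> edges_at (b, z) a <-> (if b then z = x else z = y).
Proof.
  intro ha; unfold edges_at; rewrite (cover_arc G x y a b z ha), minimal_arc.
  split; [tauto | intro; split; eauto].
Qed.

Lemma edges_at_is_arc w a : edges_at w a -> exists x y, is_arc G x y a.
Proof. intros [ma _]; apply minimal_arc, ma. Qed.

Lemma edges_at_two_ends w u v a :
  edges_at w a -> edges_at u a -> edges_at v a -> u <> w -> v <> w -> u = v.
Proof.
  intros hw hu hv nu nv; destruct (edges_at_is_arc w a hw) as [x [y ha]].
  destruct w as [[|] zw], u as [[|] zu], v as [[|] zv];
    rewrite (edges_at_arc x y a _ _ ha) in hw; rewrite (edges_at_arc x y a _ _ ha) in hu;
    rewrite (edges_at_arc x y a _ _ ha) in hv; congruence.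
Qed.

Lemma edges_at_same_ends u v m n :
  u <> v -> edges_at u m -> edges_at v m -> edges_at u n -> edges_at v n -> m = n.
Proof.
  intros ne hum hvm hun hvn.
  destruct (edges_at_is_arc u m hum) as [x [y ha]], (edges_at_is_arc u n hun) as [x' [y' ha']].
  destruct u as [[|] zu], v as [[|] zv];
    rewrite (edges_at_arc _ _ _ _ _ ha) in hum; rewrite (edges_at_arc _ _ _ _ _ ha) in hvm;
    rewrite (edges_at_arc _ _ _ _ _ ha') in hun; rewrite (edges_at_arc _ _ _ _ _ ha') in hvn;
    try congruence; subst; apply (is_arc_unique G x' y'); assumption.
Qed.

Lemma edges_at_adjacent w m m' :
  edges_at w m -> edges_at w m' -> m <> m' -> adjacent (box_le G) m m'.
Proof.
  intros hm hm' ne.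
  destruct (edges_at_is_arc w m hm) as [x [y ha]], (edges_at_is_arc w m' hm') as [x' [y' ha']].
  rewrite (adjacent_arc G x y x' y' m m' ha ha'); split; [exact ne |].
  destruct w as [[|] z]; rewrite (edges_at_arc x y m _ _ ha) in hm;
    rewrite (edges_at_arc x' y' m' _ _ ha') in hm'; [left | right]; congruence.
Qed.

Lemma adjacent_edges_at m m' :
  adjacent (box_le G) m m' -> exists w, edges_at w m /\ edges_at w m'.
Proof.
  intro A; pose proof A as [mm [mm' _]].
  apply minimal_arc in mm as [x [y ha]], mm' as [x' [y' ha']].
  rewrite (adjacent_arc G x y x' y' m m' ha ha') in A; destruct A as [_ [<- | <-]];
    [exists (true, x) | exists (false, y)];
    rewrite (edges_at_arc _ _ _ _ _ ha), (edges_at_arc _ _ _ _ _ ha'); auto.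
Qed.

Lemma edges_at_clique w : clique (box_le G) (edges_at w).
Proof. split; [intros m [mm _]; exact mm | apply edges_at_adjacent]. Qed.

(* K2 x G has no triangles. *)
Lemma edges_at_of_adjacent2 w m m' n :
  edges_at w m -> edges_at w m' -> m <> m' ->
  adjacent (box_le G) n m -> adjacent (box_le G) n m' -> edges_at w n.
Proof.
  intros hm hm' ne A A'; pose proof A as [mn _].
  apply minimal_arc in mn as [p [q hn]].
  destruct (edges_at_is_arc w m hm) as [x1 [y1 h1]], (edges_at_is_arc w m' hm') as [x2 [y2 h2]].
  rewrite (adjacent_arc G p q x1 y1 n m hn h1) in A.
  rewrite (adjacent_arc G p q x2 y2 n m' hn h2) in A'.
  assert (hne : ~ (x1 = x2 /\ y1 = y2))
    by (intros [<- <-]; apply ne; apply (is_arc_unique G x1 y1); auto).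
  destruct w as [[|] z]; rewrite (edges_at_arc _ _ _ _ _ hn);
    rewrite (edges_at_arc _ _ _ _ _ h1) in hm; rewrite (edges_at_arc _ _ _ _ _ h2) in hm';
    destruct A as [_ [e1 | e1]], A' as [_ [e2 | e2]];
    solve [congruence | exfalso; apply hne; split; congruence].
Qed.

Lemma edges_at_nonempty (hG : no_isolated G) w : exists a, edges_at w a.
Proof.
  destruct w as [[|] x]; destruct (hG x) as [y e];
    [exists (arc_box G x y e) | exists (arc_box G y x (edge_sym G x y e))];
    rewrite (edges_at_arc _ _ _ _ _ (arc_box_is_arc _ _ _ _)); reflexivity.
Qed.

Lemma singleton_edges_at_pendant w m : singleton (edges_at w) m -> pendant (box_le G) m.
Proof.
  intro S; assert (hm : edges_at w m) by (apply S; reflexivity).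
  split; [exact (proj1 hm) |]; intros [m1 [m2 [A1 [A2 [ne nA]]]]]; apply nA.
  assert (other : forall n,
    adjacent (box_le G) m n -> exists u, u <> w /\ edges_at u m /\ edges_at u n).
  { intros n A; destruct (adjacent_edges_at m n A) as [u [hu hn]]; exists u; split; auto.
    intros ->; apply S in hn as ->; destruct A as [_ [_ [ne' _]]]; auto. }
  destruct (other m1 A1) as [u1 [n1 [hu1 h1]]], (other m2 A2) as [u2 [n2 [hu2 h2]]].
  rewrite (edges_at_two_ends w u1 u2 m hm hu1 hu2 n1 n2) in h1.
  exact (edges_at_adjacent u2 m1 m2 h1 h2 ne).
Qed.

Lemma pendant_edges_at m : pendant (box_le G) m -> exists w, singleton (edges_at w) m.
Proof.
  intros [mm np]; apply minimal_arc in mm as [x [y ha]].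
  assert (hx : edges_at (true, x) m) by (rewrite (edges_at_arc _ _ _ _ _ ha); reflexivity).
  assert (hy : edges_at (false, y) m) by (rewrite (edges_at_arc _ _ _ _ _ ha); reflexivity).
  destruct (classic (forall n, edges_at (true, x) n -> n = m)) as [only | [n1 h1]%not_all_ex_not].
  { exists (true, x); intro n; split; [apply only | intros ->; exact hx]. }
  exists (false, y); intro n; split; [| intros ->; exact hy].
  intro h2; apply NNPP; intro n2; apply np.
  apply imply_to_and in h1 as [h1 n1'].
  destruct (edges_at_is_arc _ _ h1) as [x1 [y1 ha1]], (edges_at_is_arc _ _ h2) as [x2 [y2 ha2]].
  rewrite (edges_at_arc _ _ _ _ _ ha1) in h1; rewrite (edges_at_arc _ _ _ _ _ ha2) in h2; subst x1 y2.
  assert (y1 <> y) by (intros ->; exact (n1' (is_arc_unique G x y n1 m ha1 ha))).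
  assert (x2 <> x) by (intros ->; exact (n2 (is_arc_unique G x y n m ha2 ha))).
  exists n1, n. rewrite !(adjacent_arc G _ _ _ _ _ _ ha ha1), !(adjacent_arc G _ _ _ _ _ _ ha ha2),
    (adjacent_arc G _ _ _ _ _ _ ha1 ha2).
  split; [split; auto | split; [split; auto |]].
  split; [intros <-; destruct (is_arc_ends G _ _ _ _ _ ha1 ha2) | intros [_ [? | ?]]]; congruence.
Qed.

Lemma star_edges_at (hG : no_isolated G) w : star (box_le G) (edges_at w).
Proof.
  destruct (classic (two_points (edges_at w))) as [two | one]; [left | right].
  - split; [split; [apply edges_at_clique |] | exact two].
    destruct two as [m [m' [hm [hm' ne]]]]; intros T [_ Tadj] ST n Tn.
    destruct (classic (n = m)) as [-> | n1]; [exact hm |].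
    destruct (classic (n = m')) as [-> | n2]; [exact hm' |].
    apply (edges_at_of_adjacent2 w m m' n hm hm' ne); apply Tadj; auto.
  - destruct (edges_at_nonempty hG w) as [m hm]; exists m.
    assert (S : singleton (edges_at w) m).
    { intro n; split; [| intros ->; exact hm].
      intro hn; apply NNPP; intro ne; apply one; exists n, m; auto. }
    split; [exact S | exact (singleton_edges_at_pendant w m S)].
Qed.

Lemma star_is_edges_at S : star (box_le G) S -> exists w, S = edges_at w.
Proof.
  intros [[[[Smin Sadj] Smax] [m [m' [hm [hm' ne]]]]] | [m [Sm pm]]].
  - destruct (adjacent_edges_at m m' (Sadj m m' hm hm' ne)) as [w [hw hw']]; exists w.
    assert (sub : forall n, S n -> edges_at w n).
    { intros n hn; destruct (classic (n = m)) as [-> | n1]; [exact hw |].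
      destruct (classic (n = m')) as [-> | n2]; [exact hw' |].
      apply (edges_at_of_adjacent2 w m m' n hw hw' ne); apply Sadj; auto. }
    apply pred_ext; intro n; split; [apply sub | apply (Smax _ (edges_at_clique w) sub)].
  - destruct (pendant_edges_at m pm) as [w Sw]; exists w.
    apply pred_ext; intro n; rewrite (Sm n), (Sw n); reflexivity.
Qed.

Lemma edges_at_inj (hG : no_isolated G) w1 w2 :
  edges_at w1 = edges_at w2 -> fst w1 = fst w2 -> w1 = w2.
Proof.
  intros e ef; destruct (edges_at_nonempty hG w1) as [m h1].
  assert (h2 : edges_at w2 m) by (rewrite <- e; exact h1).
  destruct (edges_at_is_arc w1 m h1) as [x [y ha]].
  destruct w1 as [b1 z1], w2 as [b2 z2]; simpl in ef; subst b2.
  rewrite (edges_at_arc _ _ _ _ _ ha) in h1; rewrite (edges_at_arc _ _ _ _ _ ha) in h2.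
  destruct b1; congruence.
Qed.

Lemma edges_at_collision (hG : no_isolated G) w1 w2 :
  edges_at w1 = edges_at w2 -> w1 <> w2 -> isolated_point (box_le G) (edges_at w1).
Proof.
  intros e ne; destruct (edges_at_nonempty hG w1) as [m h1].
  assert (both : forall n, edges_at w1 n -> edges_at w2 n) by (intros n; rewrite e; auto).
  assert (only : forall n, edges_at w1 n -> n = m)
    by (intros n hn; exact (edges_at_same_ends w1 w2 n m ne hn (both n hn) h1 (both m h1))).
  exists m; split; [intro n; split; [apply only | intros ->; exact h1] |].
  intros [n A]; pose proof A as [_ [_ [nmn _]]].
  destruct (adjacent_edges_at m n A) as [u [hu hn]].
  destruct (classic (u = w1)) as [-> | n1]; [exact (nmn (eq_sym (only n hn))) |].
  destruct (classic (u = w2)) as [-> | n2].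
  - rewrite <- e in hn; exact (nmn (eq_sym (only n hn))).
  - apply n2, (edges_at_two_ends w1 u w2 m h1 hu (both m h1) n1); auto.
Qed.

Lemma isolated_edges_at_sheet w :
  isolated_point (box_le G) (edges_at w) ->
  forall b, exists w', fst w' = b /\ edges_at w' = edges_at w.
Proof.
  intros [m [Sm iso]] b.
  assert (hm : edges_at w m) by (apply Sm; reflexivity).
  destruct (edges_at_is_arc w m hm) as [x [y ha]].
  set (w' := (b, if b then x else y)).
  assert (hm' : edges_at w' m)
    by (unfold w'; rewrite (edges_at_arc _ _ _ _ _ ha); destruct b; reflexivity).
  exists w'; split; [reflexivity |].
  apply pred_ext; intro n; rewrite (Sm n); split; [| intros ->; exact hm'].
  intro hn; apply NNPP; intro ne; apply iso; exists n; apply (edges_at_adjacent w' m n hm' hn); auto.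
Qed.

Lemma edge_double_cover_common_edge v w :
  edge (tensor K2 G) v w <-> v <> w /\ exists a, edges_at v a /\ edges_at w a.
Proof.
  rewrite edge_double_cover; destruct v as [b x], w as [b' y]; simpl; split.
  - intros [nb e]; split; [congruence |].
    destruct b, b'; try congruence;
      [exists (arc_box G x y e) | exists (arc_box G y x (edge_sym G x y e))];
      rewrite !(edges_at_arc _ _ _ _ _ (arc_box_is_arc _ _ _ _)); auto.
  - intros [ne [a [hv hw]]]; destruct (edges_at_is_arc _ a hv) as [p [q ha]].
    pose proof (is_arc_edge G p q a ha) as e.
    rewrite (edges_at_arc _ _ _ _ _ ha) in hv; rewrite (edges_at_arc _ _ _ _ _ ha) in hw.
    destruct b, b'; subst; split; try congruence; auto using edge_sym.
Qed.

End EdgesAt.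

(* [v'] corresponds to [v] if the order isomorphism with inverse [F'] carries the edges at [v] onto
   those at [v']; only for an isolated edge does this leave a choice, settled by keeping the sheet. *)
Definition corresponds (G H : graph) (F' : box H -> box G)
    (v : vtx (tensor K2 G)) (v' : vtx (tensor K2 H)) : Prop :=
  edges_at H v' = (fun q => edges_at G v (F' q)) /\
  (isolated_point (box_le G) (edges_at G v) -> fst v' = fst v).

Section VertexCorrespondence.
Variables (G H : graph) (F : box G -> box H) (F' : box H -> box G).
Hypotheses (hG : no_isolated G) (hH : no_isolated H) (iso : rel_iso (box_le G) (box_le H) F F').

Lemma corresponds_exists v : exists v', corresponds G H F' v v'.
Proof.
  pose proof (star_edges_at G hG v) as st; rewrite <- (star_F _ _ _ _ iso) in st.
  destruct (star_is_edges_at H _ st) as [w ew].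
  destruct (classic (isolated_point (box_le G) (edges_at G v))) as [I | NI].
  - pose proof I as I'; rewrite <- (isolated_point_F _ _ _ _ iso), ew in I'.
    destruct (isolated_edges_at_sheet H w I' (fst v)) as [w' [sw' ew']].
    exists w'; split; [rewrite ew'; symmetry; exact ew | auto].
  - exists w; split; [symmetry; exact ew | contradiction].
Qed.

Lemma corresponds_unique v v1 v2 :
  corresponds G H F' v v1 -> corresponds G H F' v v2 -> v1 = v2.
Proof.
  intros [e1 s1] [e2 s2]; assert (e : edges_at H v1 = edges_at H v2) by congruence.
  destruct (classic (isolated_point (box_le G) (edges_at G v))) as [I | NI].
  - apply (edges_at_inj H hH); auto; rewrite s1, s2; auto.
  - apply NNPP; intro ne; apply NI.
    rewrite <- (isolated_point_F _ _ _ _ iso), <- e1; exact (edges_at_collision H hH v1 v2 e ne).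
Qed.

Lemma corresponds_sym v v' : corresponds G H F' v v' -> corresponds H G F v' v.
Proof.
  destruct iso as [FK _]; intros [e s]; split.
  - rewrite e; apply pred_ext; intro p; rewrite FK; reflexivity.
  - intro I; rewrite e, (isolated_point_F _ _ _ _ iso) in I; symmetry; auto.
Qed.

End VertexCorrespondence.

Lemma double_cover_iso_of_box_iso (G H : graph) :
  no_isolated G -> no_isolated H -> box_poset_iso G H -> graph_iso (tensor K2 G) (tensor K2 H).
Proof.
  intros hG hH [F [F' iso]]; pose proof (rel_iso_sym _ _ _ _ iso) as iso'.
  destruct (functional_choice _ (corresponds_exists G H F F' hG iso)) as [phi Rphi].
  destruct (functional_choice _ (corresponds_exists H G F' F hH iso')) as [psi Rpsi].
  assert (phiK : forall v, psi (phi v) = v)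
    by (intro v; apply (corresponds_unique H G F' F hG iso' (phi v));
        [apply Rpsi | apply (corresponds_sym G H F F' iso), Rphi]).
  assert (psiK : forall v, phi (psi v) = v)
    by (intro v; apply (corresponds_unique G H F F' hH iso (psi v));
        [apply Rphi | apply (corresponds_sym H G F' F iso'), Rpsi]).
  exists phi, psi; split; [exact phiK | split; [exact psiK |]].
  intros v w; rewrite !edge_double_cover_common_edge.
  destruct (Rphi v) as [ev _], (Rphi w) as [ew _]; rewrite ev, ew.
  rewrite (exists_surj F' F (proj1 iso)).
  split; intros [ne common]; split; try exact common; intro e; apply ne.
  - rewrite <- (phiK v), e, phiK; reflexivity.
  - rewrite e; reflexivity.
Qed.

Theorem theorem1p1 (G H : graph) :
  no_isolated G -> no_isolated H ->
  (graph_iso (tensor K2 G) (tensor K2 H) <-> box_poset_iso G H).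
Proof.
  intros hG hH; split.
  - apply box_iso_of_double_cover_iso.
  - apply double_cover_iso_of_box_iso; assumption.
Qed.
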